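(* Let $p>1$ and $q>1$. Let $X$ be an $\mathbb{R}$-smooth Banach space, $Y$ a Banach space, $\mathcal{D}(A)\subset\mathcal{D}(B)\subset X$ subspaces, and $A:\mathcal{D}(A)\to X$, $B:\mathcal{D}(B)\to Y$ (possibly nonlinear) operators. Let $y\in\mathcal{D}(A)$ satisfy $A(y)=0$ and $B(y)=0$. Let $y_\theta\in\mathcal{D}(A)$ and set $\mathcal{R}_{eq}=A(y_\theta)$, $\mathcal{R}_{bn}=B(y_\theta)$, $\mathcal{E}=\|y_\theta-y\|^q$. Assume $A$ is $(p,\psi)$-coercive with function $\Lambda$, and $\psi$ is subordinate to $B$ (on $\mathcal{D}(A)$) with functions $\gamma$ and $\rho$. Then $$\mathcal{E}\le p^{\frac qp}\left(\gamma(y_\theta,y)\rho(\mathcal{R}_{bn})+\frac1p\Lambda^p(y_\theta,y)\|\mathcal{R}_{eq}\|^p\right)^{\frac qp}.$$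
   Context: $X$ is $\mathbb{R}$-smooth if for all $y$ with $\|y\|=1$ and all $\chi\in X$ the limit $D(\|\cdot\|)(y;\chi)=\lim_{\mathbb{R}\ni s\to0}\frac{\|y+s\chi\|-\|y\|}{s}$ exists (hence it exists for every $y\ne0$). Real $p$-form: $\langle y_1,y_2\rangle_p:=\|y_2\|^{p-1}D(\|\cdot\|)(y_2;y_1)$ for $y_2\neq0$, $\langle y_1,0\rangle_p:=0$ (equivalently $\|y_2\|^{p-2}\mathrm{Re}[y_1,y_2]$ with the semi-inner product $[\chi,y]=\|y\|(D(\|\cdot\|)(y;\chi)-iD(\|\cdot\|)(y;i\chi))$). $A$ is $(p,\psi)$-coercive, for $\psi:\mathcal{D}(A)\times\mathcal{D}(A)\to\mathbb{R}$, if $\|\chi-y\|^p\le\psi(\chi,y)+\Lambda(\chi,y)\langle A(\chi)-A(y),\chi-y\rangle_p$ for all $\chi,y\in\mathcal{D}(A)$, with some $\Lambda(\chi,y)\ge0$. $\psi$ is subordinate to $B$ if there is $\rho\in C(Y;\mathbb{R}^+)$ with $\rho(\xi)\to0$ as $\xi\to0$ and $|\psi(\chi,y)|\le\gamma(\chi,y)\rho(B(\chi)-B(y))$ for all $\chi,y\in\mathcal{D}(A)$, with some $\gamma(\chi,y)\ge0$. *)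

From HB Require Import structures.
From mathcomp Require Import all_boot all_order all_algebra.
From mathcomp Require Import all_classical all_reals all_analysis.
Set Implicit Arguments. Unset Strict Implicit. Unset Printing Implicit Defensive.
Import Order.TTheory GRing.Theory Num.Theory.
Import numFieldNormedType.Exports.
Local Open Scope classical_set_scope.
Local Open Scope ring_scope.

Section Defs.
Context {R : realType} {X : normedModType R}.

Definition norm_dq (y chi : X) (s : R) : R := (`|y + s *: chi| - `|y|) / s.

Definition R_smooth : Prop :=
  forall y : X, `|y| = 1 -> forall chi : X,
    exists l : R, norm_dq y chi s @[s --> 0^'] --> l.

Definition Dnorm (y chi : X) : R := lim (norm_dq y chi s @[s --> 0^']).

Definition pform (p : R) (y1 y2 : X) : R :=
  if y2 == 0 then 0 else `|y2| `^ (p - 1) * Dnorm y2 y1.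

Definition is_subspace (S : set X) : Prop :=
  S 0 /\ forall (a : R) (x z : X), S x -> S z -> S (a *: x + z).

Definition coercive (p : R) (DA : set X) (A : X -> X) (psi Lambda : X -> X -> R)
  : Prop :=
  (forall x z, 0 <= Lambda x z) /\
  forall x z, DA x -> DA z ->
    `|x - z| `^ p <= psi x z + Lambda x z * pform p (A x - A z) (x - z).
End Defs.

Definition subordinate {R : realType} {X Y : normedModType R}
  (DA : set X) (B : X -> Y) (psi gamma : X -> X -> R) (rho : Y -> R) : Prop :=
  continuous rho /\ (forall xi, 0 <= rho xi) /\
  (rho xi @[xi --> (0 : Y)] --> (0 : R)) /\
  (forall x z, 0 <= gamma x z) /\
  forall x z, DA x -> DA z -> `|psi x z| <= gamma x z * rho (B x - B z).

From HB Require Import structures.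
From mathcomp Require Import all_boot all_order all_algebra.
From mathcomp Require Import all_classical all_reals all_analysis.
From mathcomp Require Import ring lra.
Import Order.TTheory GRing.Theory Num.Theory.
Import numFieldNormedType.Exports.
Local Open Scope classical_set_scope.
Local Open Scope ring_scope.

(** Coercivity at the pair [(ytheta, y)], together with [A y = 0], gives
  [e^p <= psi + Lambda <A ytheta, ytheta - y>_p]; subordination bounds [psi]
  by [gamma rho(R_bn)], and [<a, d>_p <= |a| |d|^(p-1)] because every
  difference quotient of the norm in direction [a] is at most [|a|].  Hence
  [e^p <= G + (Lambda |R_eq|) e^(p-1)], and Young's inequality with the
  conjugate exponents [p] and [p/(p-1)] absorbs [e^(p-1)] into the left-hand
  side: [e^p <= p G + (Lambda |R_eq|)^p].  Raising to the power [q/p]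
  concludes. *)

Section NormDirectionalDerivative.
Variables (R : realType) (X : normedModType R).

Lemma cvg_divr_dnbhs0 (c : R) : 0 < c -> (fun s => s / c) @ (0 : R)^' --> (0 : R)^'.
Proof.
move=> c_gt0 P; rewrite /nbhs /= /dnbhs /within /= => /nbhs_ballP [e e_gt0 eP].
apply/nbhs_ballP; exists (e * c); first exact: mulr_gt0.
move=> s /= s_near s_neq0; apply: eP; last by rewrite mulf_neq0 // invr_eq0 gt_eqF.
move: s_near; rewrite /ball /= !sub0r !normrN normrM (gtr0_norm (x := c^-1)) ?invr_gt0 //.
by rewrite ltr_pdivrMr.
Qed.

Lemma norm_dq_scale (c : R) (u a : X) (s : R) : 0 < c ->
  norm_dq (c *: u) a s = norm_dq u a (s / c).
Proof.
move=> c_gt0; rewrite /norm_dq.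
have [->|s_neq0] := eqVneq s 0; first by rewrite !mul0r invr0 !mulr0.
have -> : c *: u + s *: a = c *: (u + (s / c) *: a).
  by rewrite scalerDr scalerA mulrCA mulfV ?gt_eqF // mulr1.
rewrite !normrZ gtr0_norm //; field.
by rewrite s_neq0 gt_eqF.
Qed.

Lemma norm_dq_le (d a : X) (s : R) : norm_dq d a s <= `|a|.
Proof.
rewrite /norm_dq; have [->|s_neq0] := eqVneq s 0; first by rewrite invr0 mulr0.
apply: le_trans (ler_norm _) _.
rewrite normrM normfV ler_pdivrMr ?normr_gt0 // mulrC.
apply: le_trans (ler_dist_dist _ _) _.
by rewrite (addrC d) addrK normrZ.
Qed.

Hypothesis smoothX : @R_smooth R X.

Lemma cvg_norm_dq (d a : X) : d != 0 -> cvg (norm_dq d a s @[s --> 0^']).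
Proof.
move=> d_neq0; have d_gt0 : 0 < `|d| by rewrite normr_gt0.
set u := `|d|^-1 *: d.
have u_unit : `|u| = 1.
  by rewrite normrZ ger0_norm ?invr_ge0 ?ltW // mulVf ?gt_eqF.
have d_scale : d = `|d| *: u by rewrite scalerA mulfV ?gt_eqF // scale1r.
have [l ul] := smoothX u u_unit a.
have -> : norm_dq d a = norm_dq u a \o (fun s => s / `|d|).
  by apply: funext => s /=; rewrite [in LHS]d_scale norm_dq_scale.
apply/cvg_ex; exists l.
by move=> P /ul; apply: cvg_divr_dnbhs0.
Qed.

Lemma Dnorm_le (d a : X) : d != 0 -> Dnorm d a <= `|a|.
Proof.
move=> d_neq0; apply: limr_le; first exact: cvg_norm_dq.
by near=> s; apply: norm_dq_le.
Unshelve. all: by end_near.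
Qed.

Lemma pform_le (p : R) (a d : X) : pform p a d <= `|a| * `|d| `^ (p - 1).
Proof.
rewrite /pform; case: eqP => [_|/eqP d_neq0].
  by rewrite mulr_ge0 ?powR_ge0.
by rewrite mulrC ler_wpM2r ?powR_ge0 ?Dnorm_le.
Qed.

End NormDirectionalDerivative.

Section PowerInequalities.
Variable R : realType.

Lemma young_absorb (p e b G : R) : 1 < p -> 0 <= e -> 0 <= b ->
  e `^ p <= G + b * e `^ (p - 1) -> e `^ p <= p * G + b `^ p.
Proof.
move=> p_gt1 e_ge0 b_ge0 ep_le.
have p_gt0 : 0 < p by apply: lt_trans p_gt1.
have p1_gt0 : 0 < p - 1 by rewrite subr_gt0.
have conj_exp : p^-1 + (p / (p - 1))^-1 = 1.
  by field; rewrite !gt_eqF.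
have := conjugate_powR b_ge0 (powR_ge0 e (p - 1)) p_gt0 (divr_gt0 p_gt0 p1_gt0) conj_exp.
rewrite -powRrM (_ : (p - 1) * (p / (p - 1)) = p); last by field; rewrite gt_eqF.
have -> : e `^ p / (p / (p - 1)) = e `^ p - p^-1 * e `^ p.
  by field; rewrite !gt_eqF.
move=> young.
have : p^-1 * e `^ p <= G + p^-1 * b `^ p by rewrite mulrC; lra.
move/(ler_wpM2l (ltW p_gt0)); rewrite mulrDr !mulrA mulfV ?gt_eqF //.
by rewrite !mul1r.
Qed.

Lemma powR_le_divr (p q e x : R) : 0 < p -> 0 <= q -> 0 <= e ->
  e `^ p <= x -> e `^ q <= x `^ (q / p).
Proof.
move=> p_gt0 q_ge0 e_ge0 ep_le.
rewrite -{1}(_ : p * (q / p) = q); last by field; rewrite gt_eqF.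
rewrite powRrM; apply: ge0_ler_powR => //; first exact: divr_ge0 (ltW _).
- by rewrite nnegrE powR_ge0.
- by rewrite nnegrE (le_trans _ ep_le) ?powR_ge0.
Qed.

End PowerInequalities.

Theorem theorem5 (R : realType) (X Y : completeNormedModType R) (p q : R)
  (DA DB : set X) (A : X -> X) (B : X -> Y)
  (psi Lambda gamma : X -> X -> R) (rho : Y -> R) (y ytheta : X) :
  1 < p -> 1 < q -> @R_smooth R X ->
  is_subspace DA -> is_subspace DB -> DA `<=` DB ->
  DA y -> A y = 0 -> B y = 0 -> DA ytheta ->
  coercive p DA A psi Lambda ->
  subordinate DA B psi gamma rho ->
  `|ytheta - y| `^ q <=
    p `^ (q / p) *
    (gamma ytheta y * rho (B ytheta)
     + p^-1 * (Lambda ytheta y) `^ p * `|A ytheta| `^ p) `^ (q / p).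
Proof.
move=> p_gt1 q_gt1 smoothX _ _ _ DAy Ay0 By0 DAt [Lambda_ge0 coerA]
  [_ [rho_ge0 [_ [gamma_ge0 subB]]]].
have p_gt0 : 0 < p by apply: lt_trans p_gt1.
have psi_le : psi ytheta y <= gamma ytheta y * rho (B ytheta).
  by apply: le_trans (ler_norm _) _; have := subB _ _ DAt DAy; rewrite By0 subr0.
have := coerA _ _ DAt DAy; rewrite Ay0 subr0 => coer.
have L_ge0 := Lambda_ge0 ytheta y.
have := @young_absorb _ p `|ytheta - y| (Lambda ytheta y * `|A ytheta|)
  (gamma ytheta y * rho (B ytheta)) p_gt1 (normr_ge0 _) (mulr_ge0 L_ge0 (normr_ge0 _)).
rewrite powRM // => young.
have S_ge0 : 0 <= gamma ytheta y * rho (B ytheta)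
                 + p^-1 * Lambda ytheta y `^ p * `|A ytheta| `^ p.
  by rewrite addr_ge0 ?mulr_ge0 ?invr_ge0 ?powR_ge0 // ltW.
rewrite -(powRM _ (ltW p_gt0) S_ge0).
apply: powR_le_divr => //; first exact: ltW (lt_trans ltr01 q_gt1).
rewrite mulrDr -!mulrA mulVKf ?gt_eqF //; apply: young.
apply: (le_trans coer); apply: lerD; first exact: psi_le.
by rewrite -mulrA; apply: (ler_wpM2l L_ge0); exact: pform_le.
Qed.
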